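(* Let $\tau_1=(V,E_1)$ and $\tau_2=(V,E_2)$ be two rooted trees on the same finite vertex set $V$ having the same multi-index, i.e. every vertex $v\in V$ has the same number of children in $\tau_1$ as in $\tau_2$. Then there exists a bijection $\sigma$ of $V$ such that $\sigma.\tau_1=\tau_2$.
   Context: A rooted tree on a finite vertex set $V\subset\mathbb{N}$ is a set $E$ of ordered pairs of elements of $V$ (an edge $(v,w)$ means $w$ is a child of $v$) such that exactly one vertex $r$ (the root) has no parent, every other vertex has exactly one parent, and every vertex is connected to the root by following parents. For a bijection $\sigma$ of $V$ and a rooted tree $\tau=(V,E)$, set $E_\sigma=\{(v,\sigma(w)):(v,w)\in E\}$ and $\sigma.\tau=(V,E_\sigma)$; the equality $\sigma.\tau_1=\tau_2$ means $(E_1)_\sigma=E_2$. *)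

From HB Require Import structures.
From mathcomp Require Import all_boot.
From mathcomp Require Import finmap.
Set Implicit Arguments. Unset Strict Implicit. Unset Printing Implicit Defensive.
Local Open Scope fset_scope.

(* A rooted tree on a finite vertex set V of naturals: E is a finite set of
   ordered pairs (v,w) meaning "w is a child of v". *)
Definition is_rooted_tree (V : {fset nat}) (E : {fset (nat * nat)}) : Prop :=
  (forall p, p \in E -> (p.1 \in V) /\ (p.2 \in V)) /\
  exists2 r, r \in V &
    [/\ (forall u, (u, r) \notin E),
        (forall v, v \in V -> v != r -> exists! u, (u, v) \in E) &
        (forall v, v \in V -> exists s : seq nat,
            path (fun x y => (y, x) \in E) v s && (last v s == r))].

Definition nchildren (E : {fset (nat * nat)}) (v : nat) : nat :=
  #|` [fset p in E | p.1 == v] |.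

Definition is_bijection_of (V : {fset nat}) (sigma : nat -> nat) : Prop :=
  [/\ (forall v, v \in V -> sigma v \in V),
      {in V &, injective sigma} &
      (forall w, w \in V -> exists2 v, v \in V & sigma v = w)].

Definition act_edges (sigma : nat -> nat) (E : {fset (nat * nat)}) : {fset (nat * nat)} :=
  [fset (p.1, sigma p.2) | p in E].

From mathcomp Require Import all_boot.
From mathcomp Require Import finmap.
Set Implicit Arguments. Unset Strict Implicit. Unset Printing Implicit Defensive.
Local Open Scope fset_scope.

(* Since [sigma.tau] keeps the parent of every edge and only relabels the
   child, it suffices to send the root of [tau1] to the root of [tau2] and,
   for every vertex [v], the children of [v] in [tau1] bijectively onto its
   children in [tau2]; such bijections exist because the numbers of children
   agree. *)

Section MatchSeq.

Variables (T : eqType) (x0 : T) (s1 s2 : seq T).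
Hypothesis size_s12 : size s1 = size s2.

Definition match_seq (x : T) : T := nth x0 s2 (index x s1).

Lemma mem_match_seq x : x \in s1 -> match_seq x \in s2.
Proof. by move=> s1x; rewrite mem_nth // -size_s12 index_mem. Qed.

Lemma match_seq_inj : uniq s2 -> {in s1 &, injective match_seq}.
Proof.
move=> uniq_s2 x y s1x s1y /eqP.
rewrite nth_uniq -?size_s12 ?index_mem // => /eqP eq_index.
by rewrite -(nth_index x0 s1x) eq_index nth_index.
Qed.

Lemma match_seq_onto y : uniq s1 -> y \in s2 -> exists2 x, x \in s1 & match_seq x = y.
Proof.
move=> uniq_s1 s2y; have lt_y : index y s2 < size s1 by rewrite size_s12 index_mem.
exists (nth x0 s1 (index y s2)); first exact: mem_nth.
by rewrite /match_seq index_uniq // nth_index.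
Qed.

End MatchSeq.

Definition children (E : {fset (nat * nat)}) (u : nat) : seq nat :=
  [seq p.2 | p <- enum_fset [fset p in E | p.1 == u]].

(* The default [0] is only returned for vertices without a parent. *)
Definition parent (E : {fset (nat * nat)}) (x : nat) : nat :=
  head 0 [seq p.1 | p <- enum_fset E & p.2 == x].

Lemma mem_children E u x : (x \in children E u) = ((u, x) \in E).
Proof.
apply/idP/idP => [/mapP [[a b]] | ux].
  by rewrite in_fsetE /= inE /= => /andP [ab /eqP <-] ->.
by apply/mapP; exists (u, x); rewrite ?in_fsetE /= ?inE /= ?ux ?eqxx.
Qed.

Lemma uniq_children E u : uniq (children E u).
Proof.
rewrite map_inj_in_uniq ?fset_uniq // => -[a b] [c d].
by rewrite !in_fsetE /= !inE /= => /andP [_ /eqP ->] /andP [_ /eqP ->] /= ->.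
Qed.

Lemma size_children E u : size (children E u) = nchildren E u.
Proof. by rewrite size_map. Qed.

Definition rooted_at (V : {fset nat}) (E : {fset (nat * nat)}) (r : nat) : Prop :=
  [/\ r \in V,
      forall u x, (u, x) \in E -> u \in V /\ x \in V,
      forall u, (u, r) \notin E,
      forall x, x \in V -> x != r -> exists u, (u, x) \in E &
      forall u u' x, (u, x) \in E -> (u', x) \in E -> u = u'].

Lemma rooted_tree_rooted_at V E : is_rooted_tree V E -> exists r, rooted_at V E r.
Proof.
move=> [inV [r rV [orphan_r parent_r _]]]; exists r; split=> //.
- by move=> u x /inV.
- by move=> x xV xr; have [u [ux _]] := parent_r x xV xr; exists u.
move=> u u' x ux u'x; have xV := (inV _ ux).2.
have xr : x != r by apply: contraNneq (orphan_r u) => <-.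
by have [w [_ eq_w]] := parent_r x xV xr; rewrite -(eq_w _ ux) -(eq_w _ u'x).
Qed.

Section RootedAt.

Variables (V : {fset nat}) (E : {fset (nat * nat)}) (r : nat).
Hypothesis rootedE : rooted_at V E r.

Lemma edge_parent_in u x : (u, x) \in E -> u \in V.
Proof. by case: rootedE => _ inV _ _ _ /inV []. Qed.

Lemma edge_child_in u x : (u, x) \in E -> x \in V.
Proof. by case: rootedE => _ inV _ _ _ /inV []. Qed.

Lemma child_neq_root u x : (u, x) \in E -> x != r.
Proof. by case: rootedE => _ _ orphan_r _ _; apply: contraTneq => ->. Qed.

Lemma has_parent x : x \in V -> x != r -> exists u, (u, x) \in E.
Proof. by case: rootedE => _ _ _ ex_parent _; apply: ex_parent. Qed.

Lemma parent_unique u u' x : (u, x) \in E -> (u', x) \in E -> u = u'.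
Proof. by case: rootedE => _ _ _ _; apply. Qed.

Lemma parentE u x : (u, x) \in E -> parent E x = u.
Proof.
move=> ux; have : (u, x) \in [seq p <- enum_fset E | p.2 == x].
  by rewrite mem_filter eqxx.
rewrite /parent; case def_s : [seq p <- _ | _] => [|[a b] s] //= _.
have : (a, b) \in [seq p <- enum_fset E | p.2 == x] by rewrite def_s mem_head.
by rewrite mem_filter /= => /andP [/eqP -> ax]; apply: parent_unique ux.
Qed.

End RootedAt.

Section Relabel.

Variables (V : {fset nat}) (E1 E2 : {fset (nat * nat)}) (r1 r2 : nat).
Hypotheses (rooted1 : rooted_at V E1 r1) (rooted2 : rooted_at V E2 r2).
Hypothesis same_nchildren : forall v, v \in V -> nchildren E1 v = nchildren E2 v.

Definition relabel (x : nat) : nat :=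
  if x == r1 then r2
  else match_seq 0 (children E1 (parent E1 x)) (children E2 (parent E1 x)) x.

Lemma relabel_root : relabel r1 = r2.
Proof. by rewrite /relabel eqxx. Qed.

Lemma relabel_child u x :
  (u, x) \in E1 -> relabel x = match_seq 0 (children E1 u) (children E2 u) x.
Proof.
move=> ux; rewrite /relabel (negPf (child_neq_root rooted1 ux)).
by rewrite (parentE rooted1 ux).
Qed.

Lemma size_children_eq u : u \in V -> size (children E1 u) = size (children E2 u).
Proof. by move=> uV; rewrite !size_children same_nchildren. Qed.

Lemma relabel_edge u x : (u, x) \in E1 -> (u, relabel x) \in E2.
Proof.
move=> ux; have size_eq := size_children_eq (edge_parent_in rooted1 ux).
by rewrite (relabel_child ux) -mem_children mem_match_seq ?mem_children.
Qed.

Lemma relabel_edge_onto u w : (u, w) \in E2 -> exists2 x, (u, x) \in E1 & relabel x = w.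
Proof.
move=> uw; have size_eq := size_children_eq (edge_parent_in rooted2 uw).
have w_in : w \in children E2 u by rewrite mem_children.
have [x ux <-] := match_seq_onto 0 size_eq (uniq_children E1 u) w_in.
by rewrite mem_children in ux; exists x => //; rewrite (relabel_child ux).
Qed.

Lemma relabel_in x : x \in V -> relabel x \in V.
Proof.
move=> xV; have [-> | xr] := eqVneq x r1; first by rewrite relabel_root; case: rooted2.
have [u ux] := has_parent rooted1 xV xr.
exact: (edge_child_in rooted2 (relabel_edge ux)).
Qed.

Lemma relabel_eq_root x : x \in V -> (relabel x == r2) = (x == r1).
Proof.
move=> xV; have [-> | xr] := eqVneq x r1; first by rewrite relabel_root !eqxx.
have [u ux] := has_parent rooted1 xV xr.
exact: negPf (child_neq_root rooted2 (relabel_edge ux)).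
Qed.

Lemma relabel_inj : {in V &, injective relabel}.
Proof.
move=> x y xV yV; have [-> | xr] := eqVneq x r1 => eq_xy.
  by apply/esym/eqP; rewrite -(relabel_eq_root yV) -eq_xy relabel_root.
have yr : y != r1 by rewrite -(relabel_eq_root yV) -eq_xy relabel_eq_root.
have [[u ux] [u' u'y]] := (has_parent rooted1 xV xr, has_parent rooted1 yV yr).
have eq_u : u = u'.
  by apply: (parent_unique rooted2 (relabel_edge ux)); rewrite eq_xy relabel_edge.
subst u'; move: eq_xy; rewrite !(relabel_child ux, relabel_child u'y).
apply: match_seq_inj; rewrite ?uniq_children ?mem_children //.
exact: size_children_eq (edge_parent_in rooted1 ux).
Qed.

Lemma relabel_onto w : w \in V -> exists2 x, x \in V & relabel x = w.
Proof.
move=> wV; have [-> | wr] := eqVneq w r2.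
  by exists r1; [case: rooted1 | exact: relabel_root].
have [u uw] := has_parent rooted2 wV wr; have [x ux <-] := relabel_edge_onto uw.
by exists x => //; exact: (edge_child_in rooted1 ux).
Qed.

Lemma relabel_bijection : is_bijection_of V relabel.
Proof. by split; [exact: relabel_in | exact: relabel_inj | exact: relabel_onto]. Qed.

Lemma act_edges_relabel : act_edges relabel E1 = E2.
Proof.
apply/fsetP => -[u w]; apply/imfsetP/idP => [[[a x]] /= ax [-> ->] | uw].
  exact: relabel_edge.
by have [x ux <-] := relabel_edge_onto uw; exists (u, x).
Qed.

End Relabel.

Theorem proposition3p6 (V : {fset nat}) (E1 E2 : {fset (nat * nat)}) :
  is_rooted_tree V E1 -> is_rooted_tree V E2 ->
  (forall v, v \in V -> nchildren E1 v = nchildren E2 v) ->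
  exists sigma : nat -> nat, is_bijection_of V sigma /\ act_edges sigma E1 = E2.
Proof.
move=> /rooted_tree_rooted_at [r1 rooted1] /rooted_tree_rooted_at [r2 rooted2] same_nchildren.
exists (relabel E1 E2 r1 r2); split.
- exact: (relabel_bijection rooted1 rooted2 same_nchildren).
- exact: (act_edges_relabel rooted1 rooted2 same_nchildren).
Qed.
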